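(* Let $q$ be a power of an odd prime $p$ and let $\chi$ be a non-trivial multiplicative character of $\mathbb{F}_q$. Then for any subsets $A,B \subseteq \mathbb{F}_q$, $$\bigg|\sum_{a\in A,\, b\in B}\chi(a+b)\bigg| \leq \sqrt{q|A||B|}\Big(1-\frac{|A|}{q}\Big)^{1/2}\Big(1-\frac{|B|}{q}\Big)^{1/2}.$$
   Context: Multiplicative characters of $\mathbb{F}_q$ are homomorphisms $\mathbb{F}_q^*\to\mathbb{C}^*$, extended by $\chi(0)=0$. *)

From mathcomp Require Import all_boot all_order all_algebra all_field.
Set Implicit Arguments. Unset Strict Implicit. Unset Printing Implicit Defensive.
Import Order.TTheory GRing.Theory Num.Theory.
Local Open Scope ring_scope.

(* A multiplicative character of a finite field F: a group homomorphism
   F^* -> C^*, extended by chi 0 = 0.  Complex values are modelled in algC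
   (characters of finite groups take values in roots of unity, which lie
   in algC). *)
Definition mult_char (F : finFieldType) (chi : F -> algC) : Prop :=
  [/\ chi 0 = 0,
      (forall x, x != 0 -> chi x != 0) &
      (forall x y, x != 0 -> y != 0 -> chi (x * y) = chi x * chi y)].

Definition nontrivial_char (F : finFieldType) (chi : F -> algC) : Prop :=
  exists x : F, x != 0 /\ chi x != 1.

From mathcomp Require Import all_boot all_order all_algebra all_field.
From mathcomp Require Import ring.
Import Order.TTheory GRing.Theory Num.Theory.
Local Open Scope ring_scope.

(* Put f x = \sum_(b in B) chi (x + b).  As chi is non-trivial, \sum_x f x = 0,
   so \sum_(a in A) f a = \sum_x (1_A x - |A|/q) f x, and Cauchy-Schwarz bounds
   its square by |A| (1 - |A|/q) \sum_x |f x|^2.  Expanding \sum_x |f x|^2 yields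
   the correlations \sum_x chi (x + b) (chi (x + b'))^*, which equal q - 1 for
   b = b' and -1 otherwise, hence \sum_x |f x|^2 = q |B| (1 - |B|/q). *)

Lemma CauchySchwarz_sum (I : finType) (u v : I -> algC) :
  `|\sum_i u i * v i| ^+ 2 <= (\sum_i `|u i| ^+ 2) * (\sum_i `|v i| ^+ 2).
Proof.
set W := \sum_i u i * v i.
have lagrange : \sum_i \sum_j `|u i * (v j)^* - u j * (v i)^*| ^+ 2
    = 2%:R * ((\sum_i `|u i| ^+ 2) * (\sum_i `|v i| ^+ 2) - W * W^*).
  have termE i j : `|u i * (v j)^* - u j * (v i)^*| ^+ 2 =
      `|u i| ^+ 2 * `|v j| ^+ 2 + `|v i| ^+ 2 * `|u j| ^+ 2
      - u i * v i * (u j * v j)^* - (u i * v i)^* * (u j * v j).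
    by rewrite !normCK rmorphB !rmorphM /= !conjCK; ring.
  under eq_bigr => i _ do under eq_bigr => j _ do rewrite termE.
  under eq_bigr => i _ do rewrite !sumrB big_split /=.
  rewrite !sumrB big_split /= -!big_distrlr /= -rmorph_sum -/W; ring.
rewrite normCK -subr_ge0 -(pmulr_rge0 _ (ltr0n _ 2)) -lagrange.
by do 2!(apply: sumr_ge0 => ? _); apply: exprn_ge0.
Qed.

Lemma sum_translate {R : nmodType} {G : finZmodType} (f : G -> R) b :
  \sum_x f (x + b) = \sum_x f x.
Proof. by rewrite [RHS](reindex_inj (addIr b)). Qed.

Lemma centered_sum_le {I : finType} (A : {set I}) (f : I -> algC) :
  \sum_i f i = 0 ->
  `|\sum_(a in A) f a| ^+ 2
    <= #|A|%:R * (1 - #|A|%:R / #|I|%:R) * \sum_i `|f i| ^+ 2.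
Proof.
move=> f_centered; have [I0|I_gt0] := posnP #|I|.
  have A0 : #|A| = 0%N by apply/eqP; rewrite -leqn0 -I0 max_card.
  by rewrite (cards0_eq A0) big_set0 normr0 expr0n cards0 !mul0r.
set c : algC := #|A|%:R / #|I|%:R.
have c_mass : c * #|I|%:R = #|A|%:R by rewrite divfK // pnatr_eq0 -lt0n.
pose u i : algC := (i \in A)%:R - c.
have sumE : \sum_(a in A) f a = \sum_i u i * f i.
  under [RHS]eq_bigr => i _ do rewrite mulrBl.
  rewrite sumrB -mulr_sumr f_centered mulr0 subr0 big_mkcond.
  by apply: eq_bigr => i _; case: (i \in A); rewrite ?mul1r ?mul0r.
have u_energy : \sum_i `|u i| ^+ 2 = #|A|%:R * (1 - c).
  have u_real i : u i \is Num.real by rewrite rpredB ?rpred_div ?realn.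
  transitivity (\sum_i ((if i \in A then 1 - 2%:R * c else 0) + c ^+ 2)).
    apply: eq_bigr => i _; rewrite real_normK // /u.
    by case: (i \in A) => /=; ring.
  rewrite big_split -big_mkcond /= !sumr_const (@eq_card I xpredT I) //.
  rewrite -[(1 - _) *+ _]mulr_natr -[c ^+ 2 *+ _]mulr_natr expr2 -mulrA c_mass.
  ring.
by rewrite sumE -u_energy CauchySchwarz_sum.
Qed.

Section MultiplicativeCharacter.
Context {F : finFieldType} {chi : F -> algC}.
Hypothesis chiP : mult_char chi.

Lemma mult_char0 : chi 0 = 0.
Proof. by case: chiP. Qed.

Lemma mult_char_neq0 x : x != 0 -> chi x != 0.
Proof. by case: chiP => _ + _; apply. Qed.

Lemma mult_charMl x y : x != 0 -> chi (x * y) = chi x * chi y.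
Proof.
move=> x0; have [->|y0] := eqVneq y 0; first by rewrite mulr0 mult_char0 mulr0.
by case: chiP => _ _; apply.
Qed.

Lemma mult_char1 : chi 1 = 1.
Proof.
apply: (mulfI (@mult_char_neq0 1 (oner_neq0 _))).
by rewrite -mult_charMl ?oner_neq0 // !mulr1.
Qed.

Lemma mult_charX x n : x != 0 -> chi (x ^+ n) = chi x ^+ n.
Proof.
move=> x0; elim: n => [|n IHn]; first by rewrite !expr0 mult_char1.
by rewrite !exprS mult_charMl // IHn.
Qed.

Lemma mult_char_mul_conj x : x != 0 -> chi x * (chi x)^* = 1.
Proof.
move=> x0; rewrite -normCK.
have units_gt0 : (0 < #|F|.-1)%N.
  by rewrite -(cardC1 0); apply/card_gt0P; exists x.
have x_order : x ^+ #|F|.-1 = 1.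
  apply: (mulIf x0); rewrite mul1r -exprSr prednK ?expf_card //.
  exact: leq_trans units_gt0 (leq_pred _).
have : `|chi x| ^+ #|F|.-1 == 1.
  by rewrite -normrX -mult_charX // x_order mult_char1 normr1.
by rewrite pexpr_eq1 // => /eqP ->; rewrite expr1n.
Qed.

Hypothesis chi_nontrivial : nontrivial_char chi.

Lemma sum_mult_char : \sum_x chi x = 0.
Proof.
case: chi_nontrivial => g [g0 chig_neq1].
have sum_invariant : \sum_x chi x = chi g * \sum_x chi x.
  rewrite {1}(reindex_inj (mulfI g0)) mulr_sumr.
  by apply: eq_bigr => x _; apply: mult_charMl.
have : (chi g - 1) * \sum_x chi x = 0 by rewrite mulrBl -sum_invariant mul1r subrr.
by move/eqP; rewrite mulf_eq0 subr_eq0 (negPf chig_neq1) => /eqP.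
Qed.

Lemma mult_char_correlation d :
  \sum_x chi x * (chi (x + d))^* = if d == 0 then #|F|%:R - 1 else -1.
Proof.
have [->|d0] := eqVneq d 0.
  rewrite (bigD1 0) //= mult_char0 mul0r add0r.
  under eq_bigr => x x0 do rewrite addr0 mult_char_mul_conj //.
  have card_gt0 : (0 < #|F|)%N by apply/card_gt0P; exists 0.
  by rewrite sumr_const cardC1 -subn1 natrB.
have termE x : x != 0 -> chi x * (chi (x + d))^* = (chi (1 + d / x))^*.
  move=> x0; have -> : x + d = x * (1 + d / x).
    by rewrite mulrDr mulr1 mulrCA mulfV ?mulr1.
  by rewrite mult_charMl // rmorphM mulrA mult_char_mul_conj // mul1r.
have inj : injective (fun x => 1 + d / x).
  by move=> x y /addrI /(mulfI d0) /invr_inj.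
have := congr1 (fun z => z^*) sum_mult_char.
rewrite (reindex_inj inj) rmorph_sum rmorph0 (bigD1 0) //=.
rewrite invr0 mulr0 addr0 mult_char1 rmorph1 => sum_nonzero.
rewrite (bigD1 0) //= mult_char0 mul0r add0r.
rewrite (eq_bigr _ (fun x x0 => termE x x0)).
by apply/eqP; rewrite -addr_eq0 addrC sum_nonzero.
Qed.

Lemma mult_char_translate_correlation b b' :
  \sum_x chi (x + b) * (chi (x + b'))^* = if b == b' then #|F|%:R - 1 else -1.
Proof.
transitivity (\sum_x chi (x + b) * (chi (x + b + (b' - b)))^*).
  by apply: eq_bigr => x _; rewrite -addrA [b + _]addrC subrK.
rewrite (sum_translate (fun y => chi y * (chi (y + (b' - b)))^*)).
by rewrite mult_char_correlation subr_eq0 eq_sym.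
Qed.

Lemma sum_translates_mult_char (B : {set F}) :
  \sum_x \sum_(b in B) chi (x + b) = 0.
Proof.
by rewrite exchange_big big1 // => b _; rewrite sum_translate sum_mult_char.
Qed.

Lemma sum_norm_translates_mult_char (B : {set F}) :
  \sum_x `|\sum_(b in B) chi (x + b)| ^+ 2 = #|F|%:R * #|B|%:R - #|B|%:R ^+ 2.
Proof.
transitivity (\sum_(b in B) \sum_(b' in B) \sum_x chi (x + b) * (chi (x + b'))^*).
  under [RHS]eq_bigr => b _ do rewrite exchange_big /=.
  rewrite [RHS]exchange_big /=; apply: eq_bigr => x _.
  by rewrite normCK rmorph_sum big_distrlr.
transitivity (\sum_(b in B) (#|F|%:R - #|B|%:R : algC)).
  apply: eq_bigr => b bB.
  have entryE b' : (if b == b' then #|F|%:R - 1 else -1)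
      = (if b == b' then #|F|%:R else 0) - 1 :> algC.
    by case: ifP; rewrite ?sub0r.
  under eq_bigr => b' _ do rewrite mult_char_translate_correlation entryE.
  rewrite sumrB -big_mkcondr (big_pred1 b) ?sumr_const // => b'.
  by rewrite eq_sym andb_idl // => /eqP ->.
by rewrite sumr_const -mulr_natr; ring.
Qed.
End MultiplicativeCharacter.

Theorem theorem1p14 (F : finFieldType) (p : nat)
  (hp : prime p) (hodd : odd p) (hchar : p \in [pchar F])
  (chi : F -> algC) (hchi : mult_char chi) (hnt : nontrivial_char chi)
  (A B : {set F}) :
  `| \sum_(a in A) \sum_(b in B) chi (a + b) |
    <= sqrtC (#|F|%:R * #|A|%:R * #|B|%:R)
       * sqrtC (1 - #|A|%:R / #|F|%:R)
       * sqrtC (1 - #|B|%:R / #|F|%:R).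
Proof.
have := centered_sum_le A _ (sum_translates_mult_char hchi hnt B).
rewrite sum_norm_translates_mult_char //.
set q : algC := #|F|%:R; set nA : algC := #|A|%:R; set nB : algC := #|B|%:R.
move=> bound.
have q_gt0 : 0 < q by rewrite ltr0n; apply/card_gt0P; exists 0.
have frac_le1 (S : {set F}) : 0 <= 1 - #|S|%:R / q.
  by rewrite subr_ge0 ler_pdivrMr // mul1r ler_nat max_card.
rewrite -!sqrtCM ?nnegrE ?mulr_ge0 ?ler0n ?frac_le1 //.
rewrite -(sqrCK (normr_ge0 _)) ler_sqrtC ?nnegrE ?exprn_ge0 ?mulr_ge0 ?ler0n ?frac_le1 //.
suff -> : q * nA * nB * (1 - nA / q) * (1 - nB / q)
  = nA * (1 - nA / q) * (q * nB - nB ^+ 2) by [].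
by field; rewrite gt_eqF.
Qed.
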